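(* In any block graph $G$ there exists a vertex $w$ with $\Gamma(w)=\Gamma(G)$, and if $\Gamma(G)>\omega(G)$ then every vertex $w$ with $\Gamma(w)=\Gamma(G)$ is a cut-vertex of $G$.
   Context: A Grundy-coloring of a graph $G$ is a proper vertex coloring with nonempty color classes $C_1,\ldots,C_k$ (color $i$ on $C_i$) such that for all $i<j$ every vertex of $C_j$ has a neighbor in $C_i$. $\Gamma(G)$ is the maximum number of colors in a Grundy-coloring of $G$, and for a vertex $v$, $\Gamma(v)$ is the maximum color that $v$ receives in some Grundy-coloring of $G$. $\omega(G)$ is the size of a largest clique. A block of a graph is a maximal 2-connected subgraph or a bridge (as a $K_2$); a block graph is a graph all of whose blocks are complete graphs. A cut-vertex is a vertex whose removal increases the number of connected components. *)

(* finite simple graphs as symmetric irreflexive relations. *)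
From mathcomp Require Import all_boot.
Set Implicit Arguments. Unset Strict Implicit. Unset Printing Implicit Defensive.

Section Graph.
Variables (T : finType) (e : rel T).

Definition induced_rel (S : {set T}) : rel T :=
  [rel x y | [&& e x y, x \in S & y \in S]].

Definition conn_in (S : {set T}) (x y : T) : bool := connect (induced_rel S) x y.

Definition ncomp (S : {set T}) : nat :=
  #|[set [set y in S | conn_in S x y] | x in S]|.

Definition cut_vertex (v : T) : bool :=
  ncomp [set: T] < ncomp ([set: T] :\ v).

Definition connected_in (S : {set T}) : bool :=
  (S != set0) && [forall x in S, forall y in S, conn_in S x y].

Definition no_cut_in (S : {set T}) : bool :=
  [forall v in S, ncomp (S :\ v) <= ncomp S].

Definition block_like (S : {set T}) : bool := connected_in S && no_cut_in S.

(* a block: maximal connected subgraph without a cut-vertex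
   (= maximal 2-connected subgraph, bridge, or isolated vertex) *)
Definition is_block (B : {set T}) : bool :=
  block_like B && [forall B' : {set T}, (B \subset B') && block_like B' ==> (B' == B)].

Definition clique (B : {set T}) : bool :=
  [forall x in B, forall y in B, (x != y) ==> e x y].

Definition block_graph : Prop := forall B : {set T}, is_block B -> clique B.

Definition omega : nat := \max_(B : {set T} | clique B) #|B|.

(* colors are natural numbers; a Grundy coloring with k colors uses exactly
   colors 1..k. Since the k classes are nonempty, k <= #|T|, so colors fit in
   'I_(#|T|.+1). *)
Definition is_grundy (k : nat) (c : {ffun T -> 'I_(#|T|.+1)}) : bool :=
  [&& [forall v, (0 < c v) && (c v <= k)],
      [forall i : 'I_(#|T|.+1), (0 < i <= k) ==> [exists v, c v == i]],
      [forall u, forall v, e u v ==> (c u != c v)] &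
      [forall v, forall i : 'I_(#|T|.+1),
          (0 < i < c v) ==> [exists u, e v u && (c u == i)]]].

Definition is_grundy_coloring (c : {ffun T -> 'I_(#|T|.+1)}) : bool :=
  [exists k : 'I_(#|T|.+1), is_grundy k c].

Definition Gamma : nat :=
  \max_(k < #|T|.+1 | [exists c, is_grundy k c]) k.

Definition Gamma_v (v : T) : nat :=
  \max_(c : {ffun T -> 'I_(#|T|.+1)} | is_grundy_coloring c) c v.

End Graph.

From mathcomp Require Import all_boot zify.
Set Implicit Arguments. Unset Strict Implicit. Unset Printing Implicit Defensive.

(* In a Grundy coloring a vertex of color m has neighbours of every color
   1, ..., m - 1, so Gamma(w) is at most deg w + 1.  If w is not a cut vertex,
   any two neighbours x, y of w are connected in G - w; a minimal vertex set P
   in which x and y are connected makes w |: P connected with no cut vertex,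
   so w |: P lies in a block, which is a clique.  Hence the closed
   neighbourhood of w is a clique and Gamma(w) <= omega.  The first claim holds
   in every graph: take a vertex of top color in an optimal coloring. *)

Lemma connect_homo (T : finType) (r r' : rel T) (f : T -> T) :
  (forall u v, r u v -> connect r' (f u) (f v)) ->
  forall x y, connect r x y -> connect r' (f x) (f y).
Proof.
move=> hom x _ /connectP[p rp ->]; elim: p x rp => [|z p IHp] x /=.
  by rewrite connect0.
by case/andP=> /hom rxz /IHp; apply: connect_trans.
Qed.

Section InducedConnectivity.
Variables (T : finType) (e : rel T).
Hypothesis e_sym : symmetric e.
Implicit Types S Q : {set T}.

Lemma induced_rel_sym S : symmetric (induced_rel e S).
Proof. by move=> a b; rewrite /induced_rel /= e_sym (andbC (a \in S)). Qed.

Lemma conn_in_refl S x : conn_in e S x x.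
Proof. exact: connect0. Qed.

Lemma conn_in_trans S x y z : conn_in e S x y -> conn_in e S y z -> conn_in e S x z.
Proof. exact: connect_trans. Qed.

Lemma conn_in_sym S x y : conn_in e S x y = conn_in e S y x.
Proof. exact/sym_connect_sym/induced_rel_sym. Qed.

Lemma conn_in_edge S x y : e x y -> x \in S -> y \in S -> conn_in e S x y.
Proof. by move=> exy xS yS; apply: connect1; rewrite /induced_rel /= exy xS yS. Qed.

Lemma conn_in_subset S S' x y : S \subset S' -> conn_in e S x y -> conn_in e S' x y.
Proof.
move=> sSS'; apply: connect_sub => u v /and3P[euv uS vS].
by apply: conn_in_edge => //; apply: (subsetP sSS').
Qed.

Lemma conn_in_mem S x y : x \in S -> conn_in e S x y -> y \in S.
Proof.
move=> xS /connectP[p]; elim: p x xS => [|z p IHp] x xS /=; first by move=> _ ->.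
by case/andP=> /and3P[_ _ zS] /(IHp z zS).
Qed.

(* Collapsing everything outside Q onto q turns S-paths into Q-paths, because
   q is the only vertex of Q with neighbours in S :\: Q. *)
Lemma conn_in_retract S Q q x y :
    q \in Q -> (forall u b, u \in Q -> b \in S :\: Q -> e u b -> u = q) ->
    x \in Q -> y \in Q -> conn_in e S x y -> conn_in e Q x y.
Proof.
move=> qQ attach xQ yQ cxy; pose f u := if u \in Q then u else q.
suff: conn_in e Q (f x) (f y) by rewrite /f xQ yQ.
apply: connect_homo cxy => u v /and3P[euv uS vS]; rewrite /f.
case: ifPn => uQ; case: ifPn => vQ; rewrite ?connect0 //.
- exact: conn_in_edge.
- by rewrite (attach u v) ?inE ?vQ ?connect0.
by rewrite (attach v u) ?inE ?uQ ?connect0 // e_sym.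
Qed.

Definition comp_in S z := [set u in S | conn_in e S z u].

Lemma mem_comp_in S x y : (y \in comp_in S x) = (y \in S) && conn_in e S x y.
Proof. by rewrite inE. Qed.

Lemma comp_in_eq S x y : conn_in e S x y -> comp_in S x = comp_in S y.
Proof.
move=> cxy; apply/setP => u; rewrite !inE; case: (u \in S) => //=.
apply/idP/idP; last exact: conn_in_trans.
by apply: conn_in_trans; rewrite conn_in_sym.
Qed.

Lemma conn_in_comp_in S x y : x \in S -> conn_in e S x y -> conn_in e (comp_in S x) x y.
Proof.
move=> xS cxy.
have yC : y \in comp_in S x by rewrite inE cxy (conn_in_mem xS cxy).
have xC : x \in comp_in S x by rewrite inE xS conn_in_refl.
apply: (conn_in_retract xC _ xC yC cxy) => u b.
rewrite !inE => /andP[uS cxu] /andP[/negP bC bS] eub; case: bC.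
by rewrite bS (conn_in_trans cxu (conn_in_edge eub uS bS)).
Qed.

Lemma ncompE S : ncomp e S = #|comp_in S @: S|.
Proof. by []. Qed.

Lemma ncomp_gt0 S : S != set0 -> 0 < ncomp e S.
Proof.
case/set0Pn => z zS; rewrite ncompE card_gt0; apply/set0Pn.
by exists (comp_in S z); apply: imset_f.
Qed.

Lemma ncomp_le1 S h : {in S, forall z, conn_in e S z h} -> ncomp e S <= 1.
Proof.
move=> hub; rewrite ncompE -(cards1 (comp_in S h)); apply: subset_leq_card.
by apply/subsetP => _ /imsetP[z zS ->]; rewrite inE (comp_in_eq (hub z zS)).
Qed.

Lemma block_like_hubs S h : h \in S -> {in S, forall z, conn_in e S z h} ->
    (forall v, v \in S -> exists h', {in S :\ v, forall z, conn_in e (S :\ v) z h'}) ->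
  block_like e S.
Proof.
move=> hS hub hubD; have S0 : S != set0 by apply/set0Pn; exists h.
apply/andP; split.
  rewrite /connected_in S0; apply/forall_inP => x xS; apply/forall_inP => y yS.
  by apply: (conn_in_trans (hub x xS)); rewrite conn_in_sym; apply: hub.
apply/forall_inP => v /hubD[h' hub']; apply: leq_trans (ncomp_le1 hub') _.
exact: ncomp_gt0.
Qed.

(* If x and y were in different components of S :\ w, gluing them through w
   would make the map from components of S :\ w onto those of S non-injective. *)
Lemma conn_in_setD1_nbrs S w x y : w \in S -> x \in S :\ w -> y \in S :\ w ->
    e w x -> e w y -> ncomp e (S :\ w) <= ncomp e S -> conn_in e (S :\ w) x y.
Proof.
move=> wS xSw ySw ewx ewy le_ncomp; set Sw := S :\ w in xSw ySw le_ncomp *.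
have SwS : Sw \subset S by apply: subD1set.
pose lift (C : {set T}) := if [pick z in C] is Some z then comp_in S z else set0.
have liftE z : z \in Sw -> lift (comp_in Sw z) = comp_in S z.
  move=> zSw; rewrite /lift; case: pickP => [u | /(_ z)]; last first.
    by rewrite inE zSw conn_in_refl.
  by rewrite inE => /andP[_ czu]; apply/esym/comp_in_eq/(conn_in_subset SwS).
have [x_w y_w] : conn_in e S x w /\ conn_in e S y w.
  by split; apply: conn_in_edge; rewrite 1?e_sym // (subsetP SwS).
have onto : comp_in S @: S = lift @: (comp_in Sw @: Sw).
  apply/setP => C; apply/imsetP/imsetP => [[z zS ->] | [_ /imsetP[z zSw ->] ->]].
    have [->|zw] := eqVneq z w.
      by exists (comp_in Sw x); rewrite ?imset_f ?liftE ?(comp_in_eq x_w).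
    by exists (comp_in Sw z); rewrite ?imset_f ?liftE // !inE zw.
  by exists z; rewrite ?liftE ?(subsetP SwS).
move: le_ncomp; rewrite !ncompE onto => le_lift.
have /imset_injP lift_inj : #|lift @: (comp_in Sw @: Sw)| == #|comp_in Sw @: Sw|.
  by rewrite eqn_leq le_lift leq_imset_card.
have : comp_in Sw x = comp_in Sw y.
  apply: lift_inj; rewrite ?imset_f ?liftE //.
  by apply/comp_in_eq/(conn_in_trans x_w); rewrite conn_in_sym.
by move/setP/(_ y); rewrite !mem_comp_in ySw conn_in_refl.
Qed.

End InducedConnectivity.

Section MinimalLink.
Variables (T : finType) (e : rel T).
Hypothesis e_sym : symmetric e.
Implicit Types S Q : {set T}.

Definition linked_in x y Q := [&& x \in Q, y \in Q & conn_in e Q x y].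

Variables (w x y : T) (P : {set T}).
Hypotheses (ewx : e w x) (ewy : e w y) (wP : w \notin P).
Hypothesis minP : minset (linked_in x y) P.

Let linkP : linked_in x y P := minsetp minP.
Let xP : x \in P. Proof. by case/and3P: linkP. Qed.
Let yP : y \in P. Proof. by case/and3P: linkP. Qed.
Let cxy : conn_in e P x y. Proof. by case/and3P: linkP. Qed.

Lemma minlink_conn z : z \in P -> conn_in e P z x.
Proof.
have compP : comp_in e P x = P.
  apply: (minsetinf minP); last by apply/subsetP => u; rewrite mem_comp_in => /andP[].
  by rewrite /linked_in !mem_comp_in xP yP conn_in_refl cxy conn_in_comp_in.
by rewrite -{1}compP mem_comp_in (conn_in_sym e_sym); case/andP.
Qed.

(* A component D of P :\ v avoiding x and y is attached to the rest of P only
   through v, so x and y stay linked in P :\: D, against minimality. *)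
Lemma minlink_setD1 v z : v \in P -> z \in P :\ v ->
  conn_in e (P :\ v) z x || conn_in e (P :\ v) z y.
Proof.
move=> vP zPv; apply/negPn/negP; rewrite negb_or => /andP[/negbTE zx /negbTE zy].
set D := comp_in e (P :\ v) z.
have notin_D u : u \in P -> conn_in e (P :\ v) z u = false -> u \in P :\: D.
  by move=> uP nzu; rewrite inE mem_comp_in nzu andbF uP.
have vPD : v \in P :\: D by rewrite inE mem_comp_in !inE eqxx vP.
have [xPD yPD] := (notin_D x xP zx, notin_D y yP zy).
have linkPD : linked_in x y (P :\: D).
  rewrite /linked_in xPD yPD; apply: (conn_in_retract e_sym vPD _ xPD yPD cxy).
  move=> u b uPD; rewrite setDDr setDv set0U => /setIP[bP].
  rewrite mem_comp_in => /andP[bPv zb] eub.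
  case/setDP: uPD => uP uD; apply/eqP; apply: contraNT uD => uv.
  have uPv : u \in P :\ v by rewrite !inE uv uP.
  by rewrite mem_comp_in uPv (conn_in_trans zb) // conn_in_edge // e_sym.
have zD : z \in D by rewrite mem_comp_in zPv conn_in_refl.
have zP : z \in P by case/setD1P: zPv.
have := minsetinf minP linkPD (subsetDl P D).
by move/setP/(_ z); rewrite inE zD zP.
Qed.

Lemma minlink_block_like : block_like e (w |: P).
Proof.
have nbr_w S u : (u == x) || (u == y) -> w \in S -> u \in S -> conn_in e S u w.
  by case/orP=> /eqP-> wS uS; apply: conn_in_edge => //; rewrite e_sym.
have PwP : P \subset w |: P by apply: subsetUr.
apply: (block_like_hubs e_sym (setU11 w P)).
  move=> z /setU1P[-> | zP]; first exact: conn_in_refl.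
  apply: (conn_in_trans (conn_in_subset PwP (minlink_conn zP))).
  by apply: nbr_w; rewrite ?setU11 ?(subsetP PwP) ?eqxx.
move=> v /setU1P[-> | vP].
  by exists x => z; rewrite setU1K //; apply: minlink_conn.
have wPv : w \in (w |: P) :\ v.
  by rewrite !inE eqxx orTb andbT; apply: contraNneq wP => ->.
exists w => z; rewrite in_setD1 => /andP[zv /setU1P[-> | zP]].
  exact: conn_in_refl.
have sub : P :\ v \subset (w |: P) :\ v by apply: setSD; apply: subsetUr.
have zPv : z \in P :\ v by rewrite in_setD1 zv.
have [u zu uxy] : exists2 u, conn_in e (P :\ v) z u & (u == x) || (u == y).
  by case/orP: (minlink_setD1 vP zPv) => ?; [exists x | exists y]; rewrite ?eqxx ?orbT.
apply: (conn_in_trans (conn_in_subset sub zu)); apply: nbr_w => //.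
exact: (subsetP sub) (conn_in_mem zPv zu).
Qed.

End MinimalLink.

Section BlockGraph.
Variables (T : finType) (e : rel T).
Hypotheses (e_sym : symmetric e) (e_irr : irreflexive e).

Lemma clique_adj B x y : clique e B -> x \in B -> y \in B -> x != y -> e x y.
Proof. by move=> /forall_inP clB xB yB; apply/implyP; move/forall_inP: (clB x xB); apply. Qed.

Lemma block_like_sub_block S : block_like e S -> exists2 B, is_block e B & S \subset B.
Proof.
case/(@maxset_exists _ (block_like e)) => B /maxsetP[bB maxB] sSB; exists B => //.
rewrite /is_block bB; apply/forallP => B'; apply/implyP => /andP[sBB' bB'].
by rewrite (maxB B' bB' sBB').
Qed.

Lemma noncut_nbrs_block_like w x y : ~~ cut_vertex e w -> e w x -> e w y ->
  exists2 S, block_like e S & (x \in S) && (y \in S).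
Proof.
move=> ncut ewx ewy.
have nbr_Tw u : e w u -> u \in [set: T] :\ w.
  by move=> ewu; rewrite in_setD1 in_setT andbT; apply: contraTneq ewu => ->; rewrite e_irr.
have cxy : conn_in e ([set: T] :\ w) x y.
  by apply: conn_in_setD1_nbrs; rewrite ?in_setT ?nbr_Tw // leqNgt.
have [P minP sPTw] : {P | minset (linked_in e x y) P & P \subset [set: T] :\ w}.
  by apply: minset_exists; rewrite /linked_in !nbr_Tw.
have wP : w \notin P by apply/negP => /(subsetP sPTw); rewrite !inE eqxx.
exists (w |: P); first exact: minlink_block_like ewx ewy wP minP.
by case/and3P: (minsetp minP) => xP yP _; rewrite !inE xP yP !orbT.
Qed.

Lemma noncut_nbrs_adjacent (hblock : block_graph e) w x y :
  ~~ cut_vertex e w -> e w x -> e w y -> x != y -> e x y.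
Proof.
move=> ncut ewx ewy xy; have [S bS /andP[xS yS]] := noncut_nbrs_block_like ncut ewx ewy.
have [B /hblock clB /subsetP sSB] := block_like_sub_block bS.
exact: clique_adj clB (sSB x xS) (sSB y yS) xy.
Qed.

Lemma clique_closed_nbhd w : (forall x y, e w x -> e w y -> x != y -> e x y) ->
  clique e (w |: [set u | e w u]).
Proof.
move=> nbrs_adj; apply/forall_inP => a; rewrite !inE => aN.
apply/forall_inP => b; rewrite !inE => bN; apply/implyP => ab.
case/orP: aN => [/eqP a_w | ewa]; case/orP: bN => [/eqP b_w | ewb].
- by rewrite a_w b_w eqxx in ab.
- by rewrite a_w.
- by rewrite b_w e_sym.
- exact: nbrs_adj.
Qed.

End BlockGraph.

Section Grundy.
Variables (T : finType) (e : rel T).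
Implicit Types (c : {ffun T -> 'I_#|T|.+1}) (k : 'I_#|T|.+1).

Lemma grundy_class_nonempty k c (i : 'I_#|T|.+1) :
  is_grundy e k c -> 0 < i <= k -> exists v, c v = i.
Proof.
case/and4P=> _ /forallP/(_ i) /implyP hit _ _ /hit /existsP[v /eqP cv].
by exists v.
Qed.

(* A vertex of color m sees all the colors 1, ..., m - 1 among its neighbours. *)
Lemma grundy_color_le_deg k c v : is_grundy e k c -> (c v).-1 <= #|[set u | e v u]|.
Proof.
case/and4P=> _ _ _ /forallP/(_ v) below.
rewrite -(size_iota 1 (c v).-1) -(size_image (fun u => val (c u)) [set u | e v u]).
apply: uniq_leq_size (iota_uniq _ _) _ => i; rewrite mem_iota => /andP[i_gt0 i_le].
have i_lt : i < c v by lia.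
have i_T : i < #|T|.+1 by apply: ltn_trans i_lt (ltn_ord _).
have := forallP below (inord i); rewrite inordK // i_gt0 i_lt /=.
case/existsP=> u /andP[evu /eqP cu].
have -> : i = c u by rewrite cu inordK.
by apply: image_f; rewrite inE.
Qed.

Lemma grundy_color_le k c v : is_grundy e k c -> c v <= k.
Proof. by case/and4P=> /forallP/(_ v)/andP[]. Qed.

Lemma grundy_le_Gamma k c : is_grundy e k c -> k <= Gamma e.
Proof.
move=> gk; apply: (@leq_bigmax_cond _ (fun k => [exists c, is_grundy e k c]) val).
by apply/existsP; exists c.
Qed.

Lemma color_le_Gamma_v c v : is_grundy_coloring e c -> c v <= Gamma_v e v.
Proof. exact: (@leq_bigmax_cond _ (is_grundy_coloring e) (fun c => val (c v))). Qed.

Lemma Gamma_v_le_Gamma v : Gamma_v e v <= Gamma e.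
Proof.
apply/bigmax_leqP => c /existsP[k gk].
exact: leq_trans (grundy_color_le v gk) (grundy_le_Gamma gk).
Qed.

Lemma exists_Gamma_v_eq_Gamma : 0 < #|T| -> exists w, Gamma_v e w = Gamma e.
Proof.
move=> T_gt0; have [w max_w] := eq_bigmax (Gamma_v e) T_gt0.
exists w; apply/eqP; rewrite eqn_leq Gamma_v_le_Gamma -max_w.
apply/bigmax_leqP => k /existsP[c gk]; have [k0 | k_gt0] := posnP k; first by rewrite k0.
have [v cv] : exists v, c v = k by apply: grundy_class_nonempty gk _; rewrite k_gt0 leqnn.
apply: leq_trans (leq_bigmax v); rewrite -cv; apply: color_le_Gamma_v.
by apply/existsP; exists k.
Qed.

Lemma Gamma_v_le_omega (e_sym : symmetric e) (e_irr : irreflexive e) w :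
  (forall x y, e w x -> e w y -> x != y -> e x y) -> Gamma_v e w <= omega e.
Proof.
move=> nbrs_adj; apply/bigmax_leqP => c /existsP[k gk].
have clq := clique_closed_nbhd e_sym nbrs_adj.
apply: leq_trans (@leq_bigmax_cond _ (clique e) (fun B => #|B|) _ clq).
rewrite cardsU1 inE e_irr add1n.
by apply: leq_trans (leqSpred _) _; rewrite ltnS (grundy_color_le_deg w gk).
Qed.

End Grundy.

Theorem proposition3 (T : finType) (e : rel T)
    (e_sym : symmetric e) (e_irr : irreflexive e)
    (T_nonempty : 0 < #|T|)
    (hblock : block_graph e) :
  (exists w : T, Gamma_v e w = Gamma e) /\
  (omega e < Gamma e ->
     forall w : T, Gamma_v e w = Gamma e -> cut_vertex e w).
Proof.
split; first exact: exists_Gamma_v_eq_Gamma.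
move=> omega_lt w Gw; apply: contraLR omega_lt => ncut.
rewrite -leqNgt -Gw; apply: Gamma_v_le_omega => // x y.
exact: noncut_nbrs_adjacent.
Qed.
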